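(* If an $n$-qubit code satisfies the Knill–Laflamme conditions for all spherical Pauli errors $\mathrm{Sph}(E)$ with $\mathrm{wt}(E)<d$, then it also satisfies the Knill–Laflamme conditions for all symmetrized Pauli errors $\mathrm{Sym}(E)$ with $\mathrm{wt}(E)<d$.
   Context: For an $n$-qubit operator $A$, $\mathrm{Sym}(A)=\tfrac{1}{n!}\sum_{\sigma\in S_n}P_\sigma^\dagger AP_\sigma$ where $P_\sigma$ permutes the tensor factors. A Pauli $E$ of weight $w$ (number of non-identity factors) is uniquely $E=E_1\cdots E_w$ with each $E_i$ of weight one, and $\mathrm{Sph}(E)=\mathrm{Sym}(E_1)\cdots\mathrm{Sym}(E_w)$. A code satisfies the Knill–Laflamme conditions for an operator $A$ if $\langle\phi|A|\psi\rangle=c_A\langle\phi|\psi\rangle$ for all codewords, with $c_A$ independent of the codewords. *)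

From mathcomp Require Import all_boot all_order all_algebra all_fingroup all_field.
Set Implicit Arguments. Unset Strict Implicit. Unset Printing Implicit Defensive.
Import GRing.Theory Num.Theory.
Local Open Scope ring_scope.

(* Computational basis states of n qubits: bit strings. *)
Definition bits (n : nat) : finType := {ffun 'I_n -> bool}.
(* State vectors and operators (given by their matrix entries <x|A|y>). *)
Definition vec (n : nat) := bits n -> algC.
Definition op (n : nat) := bits n -> bits n -> algC.

Definition opmul n (A B : op n) : op n := fun x y => \sum_(z : bits n) A x z * B z y.
Definition opid n : op n := fun x y => (x == y)%:R.
Definition adjoint n (A : op n) : op n := fun x y => (A y x)^*.
Definition apply n (A : op n) (v : vec n) : vec n := fun x => \sum_(y : bits n) A x y * v y.
Definition inner n (u v : vec n) : algC := \sum_(x : bits n) (u x)^* * v x.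

(* Single-qubit Paulis: 0 = I, 1 = X, 2 = Y, 3 = Z; basis bits false = |0>, true = |1>. *)
Definition pauli1 (p : 'I_4) (a b : bool) : algC :=
  match val p with
  | 0%N => (a == b)%:R
  | 1%N => (a != b)%:R
  | 2%N => if a == b then 0 else if a then 'i else - 'i
  | _ => if a == b then (if a then -1 else 1) else 0
  end.

Definition pstring (n : nat) := {ffun 'I_n -> 'I_4}.
Definition pauli n (E : pstring n) : op n :=
  fun x y => \prod_(i < n) pauli1 (E i) (x i) (y i).
Definition wt n (E : pstring n) : nat := #|[set i | E i != 0%R]|.

(* The permutation operator P_sigma permuting tensor factors:
   P_sigma |x_1 ... x_n> = |x_{sigma^-1(1)} ... x_{sigma^-1(n)}>. *)
Definition permop n (s : 'S_n) : op n :=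
  fun x y => (x == [ffun i => y ((s^-1)%g i)])%:R.

Definition Symm n (A : op n) : op n :=
  fun x y => (n`!%:R)^-1 *
    \sum_(s : 'S_n) opmul (adjoint (permop s)) (opmul A (permop s)) x y.

Definition single n (i : 'I_n) (p : 'I_4) : pstring n :=
  [ffun j => if j == i then p else 0%R].

(* Sph(E) = Symm(E_1) ... Symm(E_w), factors ordered by increasing qubit index. *)
Definition Sph n (E : pstring n) : op n :=
  foldr (fun i acc => opmul (Symm (pauli (single i (E i)))) acc) (@opid n)
        [seq i <- enum 'I_n | E i != 0%R].

Definition KL n (C : vec n -> Prop) (A : op n) : Prop :=
  exists c : algC, forall phi psi : vec n, C phi -> C psi ->
    inner phi (apply A psi) = c * inner phi psi.

Definition subspace n (C : vec n -> Prop) : Prop :=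
  [/\ C (fun _ => 0),
      (forall u v, C u -> C v -> C (fun x => u x + v x)) &
      (forall (a : algC) u, C u -> C (fun x => a * u x))].

From mathcomp Require Import all_boot all_order all_algebra all_fingroup all_field.
Set Implicit Arguments. Unset Strict Implicit. Unset Printing Implicit Defensive.
Import GRing.Theory Num.Theory.
Local Open Scope ring_scope.

(* Averaging over permutations, Sym(P) Sym(F), for a weight-one P on a qubit i
   outside the support of F, is a combination of symmetrized Paulis: the
   permutations s with F(s i) = 0 contribute a positive multiple of Sym(P F),
   of weight wt F + 1, the others terms of weight at most wt F.  Inducting on
   the number of factors, Sph(E) = c Sym(E) + R with c != 0 and R a combination
   of Sym(F) with wt F < wt E.  The Knill-Laflamme conditions are linear in the
   operator, so induction on the weight finishes the proof. *)

(* XY = iZ, YZ = iX, ZX = iY: the product of two distinct non-identity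
   Paulis is a phase times the third one, whose index is 6 - a - b. *)
Definition pauli1_mulidx (a b : 'I_4) : 'I_4 :=
  inord (if val a == 0 then val b else if val b == 0 then val a
         else if a == b then 0 else 6 - a - b)%N.

Definition pauli1_phase (a b : 'I_4) : algC :=
  match val a, val b with
  | 1%N, 2%N | 2%N, 3%N | 3%N, 1%N => 'i
  | 1%N, 3%N | 2%N, 1%N | 3%N, 2%N => - 'i
  | _, _ => 1
  end.

Lemma pauli1_mul (a b : 'I_4) (x y : bool) :
  \sum_(c : bool) pauli1 a x c * pauli1 b c y =
  pauli1_phase a b * pauli1 (pauli1_mulidx a b) x y.
Proof.
rewrite big_bool /pauli1 /pauli1_phase /pauli1_mulidx /= inordK; last first.
  by case: a b => [[|[|[|[|?]]]] ?] // [[|[|[|[|?]]]] ?].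
case: a b => [[|[|[|[|a]]]] ?] // [[|[|[|[|b]]]] ?] //; case: x; case: y => /=;
by rewrite ?mul0r ?mulr0 ?mul1r ?mulr1 ?add0r ?addr0 ?mulrN ?mulNr ?opprK ?mulCii
   ?mulr1 ?mul1r ?opprK.
Qed.

Lemma pauli1_mulidx0l b : pauli1_mulidx 0 b = b.
Proof. by apply: val_inj; rewrite /pauli1_mulidx /= inordK. Qed.

Lemma pauli1_mulidx0r a : pauli1_mulidx a 0 = a.
Proof.
by apply: val_inj; rewrite /pauli1_mulidx /= inordK; case: a => [[|[|[|[|?]]]] ?].
Qed.

Lemma pauli1_phase0r a : pauli1_phase a 0 = 1.
Proof. by case: a => [[|[|[|[|?]]]] ?]. Qed.

Lemma pauli_mul n (G H : pstring n) x y :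
  opmul (pauli G) (pauli H) x y =
  (\prod_k pauli1_phase (G k) (H k)) *
  pauli [ffun k => pauli1_mulidx (G k) (H k)] x y.
Proof.
rewrite /opmul /pauli.
rewrite (eq_bigr (fun z : bits n =>
  \prod_i (pauli1 (G i) (x i) (z i) * pauli1 (H i) (z i) (y i)))); last first.
  by move=> z _; rewrite big_split.
rewrite -(bigA_distr_bigA (fun k c => pauli1 (G k) (x k) c * pauli1 (H k) c (y k))).
under eq_bigr do rewrite pauli1_mul.
by rewrite big_split /=; congr (_ * _); apply: eq_bigr => k _; rewrite ffunE.
Qed.

Definition perm_bits n (s : 'S_n) (x : bits n) : bits n := [ffun i => x ((s^-1)%g i)].
Definition perm_pstring n (s : 'S_n) (E : pstring n) : pstring n := [ffun j => E (s j)].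

Lemma perm_bitsM n (s t : 'S_n) x : perm_bits t (perm_bits s x) = perm_bits (s * t)%g x.
Proof. by apply/ffunP => i; rewrite !ffunE invMg permM. Qed.

Lemma perm_bits_inj n (s : 'S_n) : injective (perm_bits s).
Proof.
move=> x y /(congr1 (fun z : bits n => z (s _))) xy; apply/ffunP => i.
by have := xy i; rewrite !ffunE -permM mulgV perm1.
Qed.

Lemma perm_pstringM n (s t : 'S_n) E :
  perm_pstring t (perm_pstring s E) = perm_pstring (t * s)%g E.
Proof. by apply/ffunP => i; rewrite !ffunE permM. Qed.

Lemma pauli_perm_bits n (E : pstring n) s x y :
  pauli E (perm_bits s x) (perm_bits s y) = pauli (perm_pstring s E) x y.
Proof.
rewrite /pauli (reindex_inj (@perm_inj _ s)) /=.
by apply: eq_bigr => j _; rewrite !ffunE permK.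
Qed.

Lemma opmul_adjoint_permop n (s : 'S_n) (B : op n) x y :
  opmul (adjoint (permop s)) B x y = B (perm_bits s x) y.
Proof.
rewrite /opmul /adjoint /permop (bigD1 (perm_bits s x)) //= eqxx conjC_nat mul1r.
by rewrite big1 ?addr0 // => z /negPf; rewrite eq_sym => ->; rewrite conjC_nat mul0r.
Qed.

Lemma opmul_permop n (s : 'S_n) (A : op n) x y :
  opmul A (permop s) x y = A x (perm_bits s y).
Proof.
rewrite /opmul /permop (bigD1 (perm_bits s y)) //= eqxx mulr1.
by rewrite big1 ?addr0 // => z /negPf ->; rewrite mulr0.
Qed.

Lemma SymmE n (A : op n) x y :
  Symm A x y = (n`!%:R)^-1 * \sum_(s : 'S_n) A (perm_bits s x) (perm_bits s y).
Proof.
rewrite /Symm; congr (_ * _); apply: eq_bigr => s _.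
by rewrite opmul_adjoint_permop opmul_permop.
Qed.

Lemma Symm_perm_bits n (A : op n) s x y :
  Symm A (perm_bits s x) (perm_bits s y) = Symm A x y.
Proof.
rewrite !SymmE; congr (_ * _); rewrite [RHS](reindex_inj (mulgI s)) /=.
by apply: eq_bigr => t _; rewrite !perm_bitsM.
Qed.

Lemma Symm_pauli_perm n (E : pstring n) s x y :
  Symm (pauli (perm_pstring s E)) x y = Symm (pauli E) x y.
Proof.
rewrite !SymmE; congr (_ * _); rewrite [RHS](reindex_inj (mulIg s)) /=.
by apply: eq_bigr => t _; rewrite !pauli_perm_bits perm_pstringM.
Qed.

Lemma eq_Symm n (A B : op n) : A =2 B -> Symm A =2 Symm B.
Proof. by move=> AB x y; rewrite !SymmE; under eq_bigr do rewrite AB. Qed.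

Lemma opmul_Symm n (A B : op n) x y :
  opmul (Symm A) (Symm B) x y = Symm (opmul A (Symm B)) x y.
Proof.
rewrite [RHS]SymmE /opmul.
under eq_bigr => z _ do rewrite [Symm A _ _]SymmE -mulrA mulr_suml.
rewrite -mulr_sumr exchange_big /=; congr (_ * _); apply: eq_bigr => s _.
under eq_bigr => z _ do rewrite -(Symm_perm_bits B s).
by rewrite [RHS](reindex_inj (@perm_bits_inj n s)).
Qed.

Lemma fact_neq0 n : (n`!%:R : algC) != 0.
Proof. by rewrite pnatr_eq0 -lt0n fact_gt0. Qed.

Lemma Symm_opid n : Symm (@opid n) =2 @opid n.
Proof.
move=> x y; rewrite SymmE /opid.
under eq_bigr => s _ do rewrite (inj_eq (@perm_bits_inj n s)).
by rewrite sumr_const card_Sn -[(x == y)%:R *+ _]mulr_natl mulrA mulVf ?mul1r // fact_neq0.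
Qed.

Definition pupd n (H : pstring n) (i : 'I_n) (q : 'I_4) : pstring n :=
  [ffun k => if k == i then q else H k].

Lemma pauli_single_mul n i p (H : pstring n) x y :
  opmul (pauli (single i p)) (pauli H) x y =
  pauli1_phase p (H i) * pauli (pupd H i (pauli1_mulidx p (H i))) x y.
Proof.
rewrite pauli_mul (bigD1 i) //= big1 ?mulr1 => [|k /negPf ki]; last first.
  by rewrite ffunE ki.
rewrite ffunE eqxx; congr (_ * pauli _ x y); apply/ffunP => k; rewrite !ffunE.
by case: eqP => [->|_]; rewrite ?pauli1_mulidx0l.
Qed.

Lemma pauli_single_mul_Symm n i p (F : pstring n) x y :
  opmul (pauli (single i p)) (Symm (pauli F)) x y =
  (n`!%:R)^-1 * \sum_(s : 'S_n) pauli1_phase p (F (s i)) *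
    pauli (pupd (perm_pstring s F) i (pauli1_mulidx p (F (s i)))) x y.
Proof.
rewrite /opmul; under eq_bigr => z _ do rewrite SymmE mulrCA mulr_sumr.
rewrite -mulr_sumr exchange_big /=; congr (_ * _); apply: eq_bigr => s _.
under eq_bigr => z _ do rewrite pauli_perm_bits.
have -> : F (s i) = perm_pstring s F i by rewrite ffunE.
exact: pauli_single_mul.
Qed.

Lemma Symm_single_mul n i p (F : pstring n) x y :
  opmul (Symm (pauli (single i p))) (Symm (pauli F)) x y =
  (n`!%:R)^-1 * \sum_(s : 'S_n) pauli1_phase p (F (s i)) *
    Symm (pauli (pupd (perm_pstring s F) i (pauli1_mulidx p (F (s i))))) x y.
Proof.
rewrite opmul_Symm SymmE.
under eq_bigr => t _ do rewrite pauli_single_mul_Symm.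
under [in RHS]eq_bigr => s _ do rewrite SymmE mulrCA mulr_sumr.
by rewrite -mulr_sumr -[in RHS]mulr_sumr exchange_big.
Qed.

(* Operators are bare functions, so closure under [=2] stands in for
   functional extensionality. *)
Definition op_subspace n (P : op n -> Prop) : Prop :=
  [/\ P (fun _ _ => 0),
      (forall A B, P A -> P B -> P (fun x y => A x y + B x y)),
      (forall c A, P A -> P (fun x y => c * A x y)) &
      (forall A B, A =2 B -> P A -> P B)].

Section OpSubspace.

Variables (n : nat) (P : op n -> Prop).
Hypothesis subP : op_subspace P.

Lemma op_subspace0 : P (fun _ _ => 0).
Proof. by case: subP. Qed.

Lemma op_subspace_add A B : P A -> P B -> P (fun x y => A x y + B x y).
Proof. by case: subP => _ addP _ _; apply: addP. Qed.

Lemma op_subspace_scale c A : P A -> P (fun x y => c * A x y).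
Proof. by case: subP => _ _ scaleP _; apply: scaleP. Qed.

Lemma op_subspace_eq A B : A =2 B -> P A -> P B.
Proof. by case: subP => _ _ _ eqP; apply: eqP. Qed.

Lemma op_subspace_sum (I : Type) (r : seq I) (Q : pred I) (F : I -> op n) :
  (forall j, Q j -> P (F j)) -> P (fun x y => \sum_(j <- r | Q j) F j x y).
Proof.
move=> PF; elim: r => [|j r IH].
  by apply: op_subspace_eq op_subspace0 => x y; rewrite big_nil.
case Qj: (Q j).
  by apply: op_subspace_eq (op_subspace_add (PF j Qj) IH) => x y; rewrite big_cons Qj.
by apply: op_subspace_eq IH => x y; rewrite big_cons Qj.
Qed.

Lemma op_subspace_opmull (S : op n) : op_subspace (fun A => P (opmul S A)).
Proof.
split=> [|A B PA PB|c A PA|A B AB PA].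
- apply: op_subspace_eq op_subspace0 => x y.
  by rewrite /opmul big1 // => z _; rewrite mulr0.
- apply: op_subspace_eq (op_subspace_add PA PB) => x y.
  by rewrite /opmul -big_split; apply: eq_bigr => z _; rewrite mulrDr.
- apply: op_subspace_eq (op_subspace_scale c PA) => x y.
  by rewrite /opmul mulr_sumr; apply: eq_bigr => z _; rewrite mulrCA.
- apply: op_subspace_eq PA => x y.
  by rewrite /opmul; apply: eq_bigr => z _; rewrite AB.
Qed.

End OpSubspace.

Lemma KL_subspace n (C : vec n -> Prop) : op_subspace (KL C).
Proof.
have innerE (phi psi : vec n) (A : op n) :
    inner phi (apply A psi) = \sum_x \sum_y (phi x)^* * (A x y * psi y).
  by apply: eq_bigr => x _; rewrite mulr_sumr.
split=> [|A B [a Ha] [b Hb]|c A [a Ha]|A B AB [a Ha]].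
- exists 0 => phi psi _ _; rewrite innerE mul0r big1 // => x _.
  by rewrite big1 // => y _; rewrite mul0r mulr0.
- exists (a + b) => phi psi Cphi Cpsi.
  rewrite mulrDl -Ha // -Hb // !innerE -big_split /=; apply: eq_bigr => x _.
  by rewrite -big_split /=; apply: eq_bigr => y _; rewrite -mulrDr mulrDl.
- exists (c * a) => phi psi Cphi Cpsi.
  rewrite -mulrA -Ha // !innerE mulr_sumr; apply: eq_bigr => x _.
  by rewrite mulr_sumr; apply: eq_bigr => y _; rewrite -!mulrA mulrCA.
- exists a => phi psi Cphi Cpsi.
  by rewrite -Ha // !innerE; apply: eq_bigr => x _; apply: eq_bigr => y _; rewrite AB.
Qed.

Definition sym_span n k (A : op n) : Prop :=
  forall P, op_subspace P ->
    (forall F : pstring n, (wt F < k)%N -> P (Symm (pauli F))) -> P A.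

Lemma sym_span_subspace n k : op_subspace (@sym_span n k).
Proof.
split=> [P subP _|A B HA HB P subP PF|c A HA P subP PF|A B AB HA P subP PF].
- exact: op_subspace0.
- exact: op_subspace_add (HA P subP PF) (HB P subP PF).
- exact: op_subspace_scale (HA P subP PF).
- exact: op_subspace_eq AB (HA P subP PF).
Qed.

Lemma sym_span_Symm n k (F : pstring n) : (wt F < k)%N -> sym_span k (Symm (pauli F)).
Proof. by move=> wtF P _ PF; apply: PF. Qed.

Lemma wt_perm_pstring n (s : 'S_n) (F : pstring n) : wt (perm_pstring s F) = wt F.
Proof.
rewrite /wt -(card_imset [set k | F k != 0%R] (@perm_inj _ s^-1)).
apply: eq_card => k; rewrite inE ffunE -{2}(permK s k) mem_imset ?inE //.
exact: perm_inj.
Qed.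

Lemma wt_pupd_le n (H : pstring n) i q : (wt (pupd H i q) <= (wt H).+1)%N.
Proof.
rewrite /wt; apply: (@leq_trans #|i |: [set k | H k != 0%R]|).
  apply: subset_leq_card; apply/subsetP => k; rewrite !inE ffunE.
  by case: (k =P i).
by rewrite cardsU1; apply: leq_add (leq_b1 _) (leqnn _).
Qed.

Lemma wt_pupd_supp n (H : pstring n) i q : H i != 0%R -> (wt (pupd H i q) <= wt H)%N.
Proof.
move=> Hi; apply: subset_leq_card; apply/subsetP => k; rewrite !inE ffunE.
by case: (k =P i) => [->|].
Qed.

Lemma sym_span_Symm_single_mul n k i p (F : pstring n) : (wt F < k)%N ->
  sym_span k.+1 (opmul (Symm (pauli (single i p))) (Symm (pauli F))).
Proof.
move=> wtF; have spanS := @sym_span_subspace n k.+1.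
apply: (op_subspace_eq spanS (fun x y => esym (Symm_single_mul i p F x y))).
apply: (op_subspace_scale spanS); apply: (op_subspace_sum spanS) => s _.
apply: (op_subspace_scale spanS); apply: sym_span_Symm.
by rewrite ltnS (leq_trans (wt_pupd_le _ _ _)) // wt_perm_pstring.
Qed.

Lemma pupd_perm_pstring n (s : 'S_n) (F : pstring n) i p :
  F i = 0%R -> F (s i) = 0%R ->
  pupd (perm_pstring s F) i p = perm_pstring (s * tperm i (s i))%g (pupd F i p).
Proof.
move=> Fi Fsi; apply/ffunP => k; rewrite !ffunE permM.
case: (k =P i) => [->|/eqP ki]; first by rewrite tpermR eqxx.
case: tpermP => [ski|/perm_inj ki'|/eqP/negPf-> _ //]; last by rewrite ki' eqxx in ki.
have si : s i != i by apply: contra ki => /eqP si; rewrite -(inj_eq (@perm_inj _ s)) ski si.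
by rewrite (negPf si) Fsi ski Fi.
Qed.

Lemma Symm_single_mul_fresh n i p (F : pstring n) : F i = 0%R ->
  exists2 c : algC, c != 0 & exists2 R : op n, sym_span (wt F).+1 R &
    forall x y, opmul (Symm (pauli (single i p))) (Symm (pauli F)) x y =
                c * Symm (pauli (pupd F i p)) x y + R x y.
Proof.
move=> Fi; have spanS := @sym_span_subspace n (wt F).+1.
exists ((n`!%:R)^-1 * #|[pred s : 'S_n | F (s i) == 0%R]|%:R).
  rewrite mulf_neq0 ?invr_eq0 ?fact_neq0 // pnatr_eq0 -lt0n.
  by apply/card_gt0P; exists 1%g; rewrite inE perm1 Fi.
exists (fun x y => (n`!%:R)^-1 * \sum_(s : 'S_n | F (s i) != 0%R)
    pauli1_phase p (F (s i)) *
    Symm (pauli (pupd (perm_pstring s F) i (pauli1_mulidx p (F (s i))))) x y).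
  apply: (op_subspace_scale spanS); apply: (op_subspace_sum spanS) => s Fsi.
  apply: (op_subspace_scale spanS); apply: sym_span_Symm.
  by rewrite ltnS -(wt_perm_pstring s F) wt_pupd_supp ?ffunE.
move=> x y; rewrite Symm_single_mul (bigID (fun s : 'S_n => F (s i) == 0%R)) /=.
rewrite mulrDr -mulrA; congr (_ * _ + _).
rewrite (eq_bigr (fun=> Symm (pauli (pupd F i p)) x y)) => [|s /eqP Fsi].
  by rewrite sumr_const mulr_natl.
rewrite Fsi pauli1_phase0r pauli1_mulidx0r mul1r pupd_perm_pstring //.
exact: Symm_pauli_perm.
Qed.

Definition Sph_seq n (E : pstring n) (l : seq 'I_n) : op n :=
  foldr (fun i acc => opmul (Symm (pauli (single i (E i)))) acc) (@opid n) l.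

Definition restrict n (E : pstring n) (l : seq 'I_n) : pstring n :=
  [ffun j => if j \in l then E j else 0%R].

Lemma pauli0 n : pauli [ffun=> 0%R] =2 @opid n.
Proof.
move=> x y; rewrite /pauli /opid; case: (x =P y) => [->|xy].
  by rewrite big1 // => k _; rewrite ffunE /pauli1 /= eqxx.
have [k xyk] : exists k, x k != y k.
  apply/existsP; apply: contraT; rewrite negb_exists => /forallP xy'.
  by case: xy; apply/ffunP => k; apply/eqP/negbNE.
by rewrite (bigD1 k) //= ffunE /pauli1 /= (negPf xyk) mul0r.
Qed.

Lemma wt_restrict n (E : pstring n) l :
  uniq l -> {in l, forall i, E i != 0%R} -> wt (restrict E l) = size l.
Proof.
move=> Ul El; rewrite /wt -(card_uniqP Ul); apply: eq_card => k.
by rewrite inE ffunE; case: ifP => [/El|]; rewrite ?eqxx.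
Qed.

Lemma restrict_cons n (E : pstring n) i l :
  restrict E (i :: l) = pupd (restrict E l) i (E i).
Proof. by apply/ffunP => k; rewrite !ffunE inE; case: (k =P i) => [->|]. Qed.

Lemma Sph_seq_leading n (E : pstring n) l :
  uniq l -> {in l, forall i, E i != 0%R} ->
  exists2 c : algC, c != 0 & exists2 R : op n, sym_span (size l) R &
    forall x y, Sph_seq E l x y = c * Symm (pauli (restrict E l)) x y + R x y.
Proof.
have spanS k := @sym_span_subspace n k.
elim: l => [_ _|i l IH /= /andP[il Ul] El].
  exists 1; rewrite ?oner_neq0 //; exists (fun _ _ => 0); first exact: op_subspace0.
  have -> : restrict E [::] = [ffun=> 0%R] by apply/ffunP => k; rewrite !ffunE.
  by move=> x y; rewrite addr0 mul1r (eq_Symm (@pauli0 n)) Symm_opid.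
have El' : {in l, forall j, E j != 0%R} by move=> j lj; rewrite El // inE lj orbT.
have [c' c'_neq0 [R' spanR' SphE']] := IH Ul El'.
have Eli : restrict E l i = 0%R by rewrite ffunE (negPf il).
have [c c_neq0 [R spanR mulE]] := Symm_single_mul_fresh (E i) Eli.
rewrite wt_restrict // in spanR.
set S := Symm (pauli (single i (E i))).
exists (c' * c); first by rewrite mulf_neq0.
exists (fun x y => c' * R x y + opmul S R' x y).
  apply: (op_subspace_add (spanS _)); first exact: (op_subspace_scale (spanS _)).
  apply: (spanR' (fun A => sym_span _ (opmul S A))) => [|F wtF].
    exact: op_subspace_opmull.
  exact: sym_span_Symm_single_mul.
move=> x y; rewrite restrict_cons /= -/S {1}/opmul.
under eq_bigr => z _ do rewrite SphE' mulrDr mulrCA.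
by rewrite big_split /= -mulr_sumr -/(opmul S _ x y) mulE mulrDr mulrA addrA.
Qed.

Lemma Sph_leading n (E : pstring n) :
  exists2 c : algC, c != 0 & exists2 R : op n, sym_span (wt E) R &
    forall x y, Sph E x y = c * Symm (pauli E) x y + R x y.
Proof.
set l := [seq i <- enum 'I_n | E i != 0%R].
have Ul : uniq l by rewrite filter_uniq // enum_uniq.
have El : {in l, forall i, E i != 0%R} by move=> i; rewrite mem_filter => /andP[].
have restrictE : restrict E l = E.
  apply/ffunP => k; rewrite ffunE mem_filter mem_enum andbT.
  by case: eqP => [->|].
have [c c_neq0 [R spanR SphE]] := Sph_seq_leading Ul El.
exists c => //; exists R; first by rewrite -restrictE wt_restrict.
by move=> x y; rewrite -[in RHS]restrictE; apply: SphE.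
Qed.

Theorem lemmaS8 (n d : nat) (C : vec n -> Prop) :
  subspace C ->
  (forall E : pstring n, (wt E < d)%N -> KL C (Sph E)) ->
  forall E : pstring n, (wt E < d)%N -> KL C (Symm (pauli E)).
Proof.
move=> _ KL_Sph E.
have KLsub := KL_subspace C.
have [k] := ubnP (wt E); elim: k E => [//|k IH] E wtEk wtEd.
have [c c_neq0 [R spanR SphE]] := Sph_leading E.
have KL_R : KL C R.
  apply: (spanR _ KLsub) => F wtF.
  by apply: IH; [apply: leq_trans wtF _ | apply: ltn_trans wtF wtEd].
apply: (op_subspace_eq KLsub (A := fun x y => c^-1 * (Sph E x y + (-1) * R x y))).
  by move=> x y; rewrite SphE mulN1r addrK mulKf.
apply: (op_subspace_scale KLsub); apply: (op_subspace_add KLsub (KL_Sph E wtEd)).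
exact: (op_subspace_scale KLsub).
Qed.
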